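(* Assume $f$ satisfies conditions (A0)–(A3) below. Then there exists a constant $C>0$ such that for every $\lambda\in[0,1]$ and every $x\in\mathscr E$, if $\mathscr F_\lambda(x)=0$ then $\|x\|<C$.
   Context: Let $n,m\ge1$, $\mathbf V=\mathbb R^n$ with Euclidean inner product $x\bullet z$ and norm $|x|$; for $\mathbf y=(y^1,\dots,y^m)\in\mathbf V^m$ put $|\mathbf y|:=\max_j|y^j|$. Fix reals $0=\tau_0<\tau_1<\dots<\tau_m<2\pi$ with $\tau_{m-j+1}=2\pi-\tau_j$. Let $f:\mathbb R\times\mathbf V\times\mathbf V^m\times\mathbf V\to\mathbf V$ and for $u:\mathbb R\to\mathbf V$ put $\mathbf u_t:=(u(t-\tau_1),\dots,u(t-\tau_m))$. Let $\mathscr E:=C^2_{2\pi}(\mathbb R;\mathbf V)$ be the space of $2\pi$-periodic $C^2$ maps with norm $\|u\|:=\max\{\|u\|_\infty,\|\dot u\|_\infty,\|\ddot u\|_\infty\}$, $\mathscr C:=C_{2\pi}(\mathbb R;\mathbf V)$, $\widetilde{\mathscr C}:=C_{2\pi}(\mathbb R;\mathbf V\times\mathbf V^m\times\mathbf V)$ (sup norms). Define $L:\mathscr E\to\mathscr C$, $Lu:=\ddot u-u$ (an isomorphism); $J:\mathscr E\to\widetilde{\mathscr C}$, $(Ju)(t):=(u(t),\mathbf u_t,\dot u(t))$; $N:\widetilde{\mathscr C}\to\mathscr C$, $N(x,\mathbf y,z)(t):=f(t,x(t),\mathbf y(t),z(t))-x(t)$; and $\mathscr F_\lambda(x):=x-\lambda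 L^{-1}N(Jx)$ for $\lambda\in[0,1]$. (Thus $\mathscr F_\lambda(x)=0$ iff $x$ is a $2\pi$-periodic solution of $\ddot x=\lambda f(t,x,\mathbf x_t,\dot x)+(1-\lambda)x$.) Conditions: (A0) $f$ continuous and $2\pi$-periodic in $t$. (A1) There is $R>0$ such that: $|x|\ge R$, $|\mathbf y|\le|x|$, $x\bullet z=0$ imply $x\bullet f(t,x,\mathbf y,z)>0$. (A2) There is a continuous $\phi:[0,\infty)\to(0,\infty)$ with $\int_0^\infty\frac{s\,ds}{\phi(s)}=\infty$ and $|f(t,x,\mathbf y,z)|\le\phi(|z|)$ whenever $|x|,|\mathbf y|\le R$. (A3) There are $\alpha,K>0$ with $|f(t,x,\mathbf y,z)|\le\alpha(x\bullet f(t,x,\mathbf y,z)+|z|^2)+K$ whenever $|x|,|\mathbf y|\le R$. *)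

From HB Require Import structures.
From mathcomp Require Import all_boot all_order all_algebra.
From mathcomp Require Import all_classical all_reals all_analysis.
Set Implicit Arguments. Unset Strict Implicit. Unset Printing Implicit Defensive.
Import Order.TTheory GRing.Theory Num.Theory.
Import numFieldNormedType.Exports.
Local Open Scope classical_set_scope.
Local Open Scope ring_scope.

(* V = R^n is represented by row vectors 'rV[R]_n; V^m by m x n matrices whose
   j-th row (j : 'I_m, 0-based) is y^{j+1}. *)

Definition edot (R : realType) (n : nat) (x z : 'rV[R]_n) : R :=
  \sum_(k < n) x 0 k * z 0 k.

Definition enorm (R : realType) (n : nat) (x : 'rV[R]_n) : R :=
  Num.sqrt (edot x x).

Definition ymax (R : realType) (m n : nat) (y : 'M[R]_(m, n)) : R :=
  \big[Num.max/0]_(j < m) enorm (row j y).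

Definition delays (R : realType) (m n : nat) (tau : 'I_m -> R)
  (u : R -> 'rV[R]_n) (t : R) : 'M[R]_(m, n) :=
  \matrix_(j < m) u (t - tau j).

Definition supn (R : realType) (n : nat) (u : R -> 'rV[R]_n) : R :=
  sup (range (fun t => enorm (u t))).

Definition in_E (R : realType) (n : nat) (x : R -> 'rV[R]_n) : Prop :=
  (forall t, x (t + 2 * pi) = x t) /\
  (forall t, derivable x t 1) /\
  (forall t, derivable (derive1 x) t 1) /\
  continuous (derive1 (derive1 x)).

Definition normE (R : realType) (n : nat) (x : R -> 'rV[R]_n) : R :=
  Num.max (supn x) (Num.max (supn (derive1 x)) (supn (derive1 (derive1 x)))).

(* F_lambda(x) = 0, written after applying the isomorphism L:
   L x = lambda N(J x), i.e. x'' - x = lambda (f(t,x,x_t,x') - x). *)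
Definition F_zero (R : realType) (m n : nat) (tau : 'I_m -> R)
  (f : R -> 'rV[R]_n -> 'M[R]_(m, n) -> 'rV[R]_n -> 'rV[R]_n)
  (lam : R) (x : R -> 'rV[R]_n) : Prop :=
  forall t, derive1 (derive1 x) t - x t =
    lam *: (f t (x t) (delays tau x t) (derive1 x t) - x t).

From HB Require Import structures.
From mathcomp Require Import all_boot all_order all_algebra.
From mathcomp Require Import all_classical all_reals all_analysis.
From mathcomp.algebra_tactics Require Import ring lra.
Import Order.TTheory GRing.Theory Num.Theory.
Import numFieldNormedType.Exports.
Local Open Scope classical_set_scope.
Local Open Scope ring_scope.
Set Implicit Arguments. Unset Strict Implicit. Unset Printing Implicit Defensive.

(* Since |x|^2 is periodic it attains its maximum at some t0.  If |x(t0)| >= r,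
   then x . x' = 0 at t0, so (A1) gives x . x'' > 0 there and |x|^2 has a
   positive second derivative at its maximum, which is absurd; hence |x| < r
   and |x_t| <= r everywhere.  With G = alpha (x . x') + (K + r) t, (A3) then
   gives |x''_k| <= G', so each coordinate x'_k moves by at most the increment
   of G.  As x'_k vanishes in every period while G gains 2 pi (K + r) per
   period, |x'_k| <= pi (K + r).  Finally x'' = (1 - lam) x + lam f is bounded
   through (A2) by r + max phi over that range of |x'|. *)

Section Euclidean.
Variables (R : realType) (n : nat).
Implicit Types a b c : 'rV[R]_n.

Lemma edotC a b : edot a b = edot b a.
Proof. by apply: eq_bigr => k _; rewrite mulrC. Qed.

Lemma edotDr a b c : edot a (b + c) = edot a b + edot a c.
Proof. by rewrite /edot -big_split; apply: eq_bigr => k _; rewrite mxE mulrDr. Qed.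

Lemma edotZr a b (p : R) : edot a (p *: b) = p * edot a b.
Proof. by rewrite /edot mulr_sumr; apply: eq_bigr => k _; rewrite mxE mulrCA. Qed.

Lemma edotxx_ge0 a : 0 <= edot a a.
Proof. by apply: sumr_ge0 => k _; rewrite -expr2 sqr_ge0. Qed.

Lemma enorm_ge0 a : 0 <= enorm a.
Proof. exact: sqrtr_ge0. Qed.

Lemma sqr_enorm a : enorm a ^+ 2 = edot a a.
Proof. by rewrite sqr_sqrtr // edotxx_ge0. Qed.

Lemma ler_enorm a b : (enorm a <= enorm b) = (edot a a <= edot b b).
Proof. by rewrite ler_sqrt // edotxx_ge0. Qed.

Lemma coord_le_enorm a k : `|a 0 k| <= enorm a.
Proof.
rewrite -sqrtr_sqr ler_sqrt ?edotxx_ge0 // /edot (bigD1 k) //= expr2 lerDl.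
by apply: sumr_ge0 => i _; rewrite -expr2 sqr_ge0.
Qed.

Lemma enorm_le_coord a (B : R) : 0 <= B -> (forall k, `|a 0 k| <= B) -> enorm a <= n%:R * B.
Proof.
move=> B0 aB; rewrite -[n%:R * B]ger0_norm ?mulr_ge0 // -sqrtr_sqr ler_sqrt ?sqr_ge0 //.
apply: (@le_trans _ _ (\sum_(k < n) B ^+ 2)).
  apply: ler_sum => k _; rewrite -expr2 -real_normK ?num_real //.
  by rewrite lerXn2r ?nnegrE.
rewrite sumr_const card_ord exprMn -[_ *+ n]mulr_natl ler_wpM2r ?sqr_ge0 //.
rewrite -natrX ler_nat.
by case: n => // k; rewrite expnS leq_pmulr // expn_gt0.
Qed.
End Euclidean.

Lemma ymax_delays_le (R : realType) (m n : nat) (tau : 'I_m -> R)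
    (u : R -> 'rV[R]_n) t (B : R) :
  0 <= B -> (forall s, enorm (u s) <= B) -> ymax (delays tau u t) <= B.
Proof. by move=> B0 uB; apply: bigmax_le => // j _; rewrite rowK. Qed.

Lemma supn_le (R : realType) (n : nat) (u : R -> 'rV[R]_n) (B : R) :
  (forall t, enorm (u t) <= B) -> supn u <= B.
Proof. by move=> uB; apply: ge_sup => [|_ [t _ <-]]; first by exists (enorm (u 0)), 0. Qed.

Lemma ler_norm_convex (R : realFieldType) (lam a b : R) : 0 <= lam <= 1 ->
  `|(1 - lam) * a + lam * b| <= (1 - lam) * `|a| + lam * `|b|.
Proof.
case/andP=> lam0 lam1; apply: le_trans (ler_normD _ _) _.
by rewrite !normrM (ger0_norm lam0) ger0_norm ?subr_ge0.
Qed.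

Section RealCalculus.
Variable R : realType.
Implicit Types (g dg h u du d2u v dv G dG : R -> R) (p s t d : R).

Lemma periodic_max g p : 0 < p -> continuous g -> (forall t, g (t + p) = g t) ->
  exists t0, forall t, g t <= g t0.
Proof.
move=> p0 cg gp.
have gnat (N : nat) s : g (s + N%:R * p) = g s.
  by elim: N => [|N IH]; rewrite ?mul0r ?addr0 // mulrSr mulrDl mul1r addrA gp.
have gint (z : int) s : g (s + z%:~R * p) = g s.
  case: z => N; first exact: gnat.
  by rewrite NegzE mulrNz mulNr -[in RHS](subrK (N.+1%:R * p) s) gnat.
have [t0 _ gt0] := EVT_max (ltW p0) (continuous_subspaceT cg).
exists t0 => t; set z := Num.floor (t / p).
have /andP[zlo zhi] := floor_itv (t / p).
rewrite ler_pdivlMr // in zlo; rewrite ltr_pdivrMr // intrD mulrDl mul1r in zhi.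
rewrite -[t](subrK (z%:~R * p)) gint; apply: gt0.
by rewrite in_itv /= subr_ge0 zlo /= lerBlDl ltW.
Qed.

Lemma is_derive_nonincr v dv : (forall t, is_derive t 1 v (dv t)) ->
  (forall t, dv t <= 0) -> {homo v : s t /~ s <= t}.
Proof.
move=> Dv dv_le0 t s; rewrite le_eqVlt => /predU1P[-> //|st].
have cv : {within `[s, t], continuous v}.
  by apply: derivable_within_continuous => x _; have [] := Dv x.
have [c _ vst] := MVT st (fun x _ => Dv x) cv.
by rewrite -subr_le0 vst mulr_le0_ge0 // subr_ge0 ltW.
Qed.

Lemma normB_le_dominating u du G dG : (forall t, is_derive t 1 u (du t)) ->
  (forall t, is_derive t 1 G (dG t)) -> (forall t, `|du t| <= dG t) ->
  forall s t, s <= t -> `|u t - u s| <= G t - G s.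
Proof.
move=> Du DG duG s t st.
have le_uG : u t - G t <= u s - G s.
  apply: (is_derive_nonincr (fun x => is_deriveB (Du x) (DG x))) st => x.
  by rewrite subr_le0 (le_trans (ler_norm _)).
have le_NuG : - u t - G t <= - u s - G s.
  apply: (is_derive_nonincr (fun x => is_deriveB (is_deriveN (Du x)) (DG x))) st => x.
  by rewrite subr_le0 (le_trans _ (duG x)) // -normrN ler_norm.
by rewrite ler_norml; apply/andP; split; lra.
Qed.

Lemma periodic_derive_bound u du d2u G dG p D : 0 < p ->
  (forall t, u (t + p) = u t) -> (forall t, du (t + p) = du t) ->
  (forall t, G (t + p) = G t + D) ->
  (forall t, is_derive t 1 u (du t)) -> (forall t, is_derive t 1 du (d2u t)) ->
  (forall t, is_derive t 1 G (dG t)) -> (forall t, `|d2u t| <= dG t) ->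
  forall t, `|du t| <= D / 2.
Proof.
move=> p0 up dup Gp Du Ddu DG d2uG t.
have tp : t < t + p by rewrite ltrDl.
have du_ex x : derivable u x 1 by have [] := Du x.
have cu : {within `[t, t + p], continuous u}.
  by apply: derivable_within_continuous => x _.
have [c /[!in_itv] /= /andP[tc cp] Du0] := Rolle tp (fun x _ => du_ex x) cu (esym (up t)).
have duc : du c = 0 by have [_ <-] := Du c; have [_ ->] := Du0.
have := normB_le_dominating Ddu DG d2uG (ltW tc).
have := normB_le_dominating Ddu DG d2uG (ltW cp).
rewrite dup Gp duc sub0r subr0 normrN; lra.
Qed.

Lemma is_derive_gt0_right h t0 d : is_derive t0 1 h d -> 0 < d -> h t0 = 0 ->
  exists2 e, 0 < e & forall s, t0 < s < t0 + e -> 0 < h s.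
Proof.
move=> [dh <-] d0 h0.
have : \forall e \near 0^', 0 < e^-1 *: (h (e *: 1 + t0) - h t0) by apply: cvgr_gt d0.
case/nbhs_ballP => e e0 He; exists e => // s /andP[t0s se].
have st0 : 0 < s - t0 by rewrite subr_gt0.
have := He (s - t0); rewrite /ball /= sub0r normrN gtr0_norm // ltrBlDr addrC.
move=> /(_ se (lt0r_neq0 st0)).
by rewrite h0 subr0 /GRing.scale /= mulr1 subrK pmulr_rgt0 // invr_gt0.
Qed.

Lemma max_is_derive_eq0 g dg t0 : (forall t, is_derive t 1 g (dg t)) ->
  (forall t, g t <= g t0) -> dg t0 = 0.
Proof.
move=> Dg gmax; have : is_derive t0 1 g 0.
  apply: (@derive1_at_max _ g (t0 - 1) (t0 + 1)).
  - lra.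
  - by move=> t _; have [] := Dg t.
  - by rewrite in_itv /=; apply/andP; split; lra.
  - by move=> t _; exact: gmax.
by have [_ <-] := Dg t0 => -[_ ->].
Qed.

Lemma max_is_derive2_le0 g dg t0 d : (forall t, is_derive t 1 g (dg t)) ->
  is_derive t0 1 dg d -> (forall t, g t <= g t0) -> d <= 0.
Proof.
move=> Dg Ddg gmax; rewrite leNgt; apply/negP => d0.
have [e e0 dg_pos] := is_derive_gt0_right Ddg d0 (max_is_derive_eq0 Dg gmax).
have t0e : t0 < t0 + e / 2 by rewrite ltrDl divr_gt0.
have cg : {within `[t0, t0 + e / 2], continuous g}.
  by apply: derivable_within_continuous => x _; have [] := Dg x.
have [c /[!in_itv] /= /andP[t0c ce] gincr] := MVT t0e (fun x _ => Dg x) cg.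
have : 0 < g (t0 + e / 2) - g t0.
  by rewrite gincr mulr_gt0 ?subr_gt0 // dg_pos // t0c /=; lra.
by have := gmax (t0 + e / 2); lra.
Qed.
End RealCalculus.

Lemma derive1_periodic (R : realType) (V : normedModType R) (g : R -> V) p :
  (forall t, g (t + p) = g t) -> forall t, derive1 g (t + p) = derive1 g t.
Proof.
move=> gp t; rewrite /derive1.
suff -> : (fun h : R => h^-1 *: (g (h + (t + p)) - g (t + p))) =
          (fun h : R => h^-1 *: (g (h + t) - g t)) by [].
by apply/funext => h; rewrite addrA !gp.
Qed.

Section RowDerivative.
Variables (R : realType) (n : nat).
Implicit Types (u v : R -> 'rV[R]_n) (du dv : 'rV[R]_n) (t : R).

Lemma is_derive_coord u t du k : is_derive t 1 u du ->
  is_derive t 1 (fun s => u s 0 k) (du 0 k).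
Proof.
move=> [ud <-]; apply: DeriveDef; first exact: (derivable_mxP u t 1).1 ud 0 k.
by rewrite (derive_mx ud) mxE.
Qed.

Lemma is_derive_edot u v t du dv : is_derive t 1 u du -> is_derive t 1 v dv ->
  is_derive t 1 (fun s => edot (u s) (v s)) (edot du (v t) + edot (u t) dv).
Proof.
move=> Du Dv.
have -> : (fun s => edot (u s) (v s)) = \sum_(k < n) (fun s => u s 0 k * v s 0 k).
  by apply/funext => s; rewrite fct_sumE.
apply: is_derive_eq.
  by apply: is_derive_sum => k; exact: is_deriveM (is_derive_coord k Du) (is_derive_coord k Dv).
rewrite /edot -big_split /=; apply: eq_bigr => k _.
by rewrite addrC [_ *: du 0 k]mulrC.
Qed.
End RowDerivative.

Section APrioriBounds.
Variables (R : realType) (n m : nat) (tau : 'I_m -> R).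
Variable f : R -> 'rV[R]_n -> 'M[R]_(m, n) -> 'rV[R]_n -> 'rV[R]_n.
Variables (r alpha K : R) (phi : R -> R).
Hypothesis r_gt0 : 0 < r.
Hypothesis hA1 : forall t x y z, r <= enorm x -> ymax y <= enorm x ->
  edot x z = 0 -> 0 < edot x (f t x y z).
Hypothesis hA2 : forall t x y z, enorm x <= r -> ymax y <= r ->
  enorm (f t x y z) <= phi (enorm z).
Hypotheses (alpha_ge0 : 0 <= alpha) (K_ge0 : 0 <= K).
Hypothesis hA3 : forall t x y z, enorm x <= r -> ymax y <= r ->
  enorm (f t x y z) <= alpha * (edot x (f t x y z) + enorm z ^+ 2) + K.

Variables (lam : R) (x : R -> 'rV[R]_n).
Hypotheses (lam01 : 0 <= lam <= 1) (xE : in_E x) (xF : F_zero tau f lam x).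

Local Notation x' := (derive1 x).
Local Notation x'' := (derive1 (derive1 x)).
Local Notation F t := (f t (x t) (delays tau x t) (x' t)).

Let Dx (t : R) : is_derive t 1 x (x' t).
Proof. by rewrite derive1E; apply: derivableP; case: xE => _ []. Qed.

Let Dx' (t : R) : is_derive t 1 x' (x'' t).
Proof. by rewrite [x'' t]derive1E; apply: derivableP; case: xE => _ [_ []]. Qed.

Lemma solution_derive2 t : x'' t = (1 - lam) *: x t + lam *: F t.
Proof.
by rewrite -(subrK (x t) (x'' t)) xF scalerBr scalerBl scale1r addrC addrA addrAC.
Qed.

Lemma edot_solution_derive2 t :
  edot (x t) (x'' t) = (1 - lam) * edot (x t) (x t) + lam * edot (x t) (F t).
Proof. by rewrite solution_derive2 edotDr !edotZr. Qed.

Let twopi_gt0 : 0 < 2 * pi :> R.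
Proof. by rewrite mulr_gt0 // pi_gt0. Qed.

Lemma solution_norm_lt t : enorm (x t) < r.
Proof.
pose g s := edot (x s) (x s).
pose dg s := edot (x' s) (x s) + edot (x s) (x' s).
have Dg (s : R) : is_derive s 1 g (dg s) := is_derive_edot (Dx s) (Dx s).
have cg : continuous g.
  by move=> s; apply/differentiable_continuous/derivable1_diffP; have [] := Dg s.
have gp s : g (s + 2 * pi) = g s by rewrite /g xE.1.
have [t0 gmax] := periodic_max twopi_gt0 cg gp.
have x_le s : enorm (x s) <= enorm (x t0) by rewrite ler_enorm gmax.
apply: le_lt_trans (x_le t) _; rewrite ltNge; apply/negP => r_le.
have xx' : edot (x t0) (x' t0) = 0.
  by have := max_is_derive_eq0 Dg gmax; rewrite /dg edotC; lra.
have xF_gt0 := hA1 t0 r_le (ymax_delays_le _ _ (enorm_ge0 _) x_le) xx'.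
have xx_gt0 : 0 < edot (x t0) (x t0).
  by rewrite -sqr_enorm exprn_gt0 // (lt_le_trans r_gt0 r_le).
have xx''_gt0 : 0 < edot (x t0) (x'' t0).
  rewrite edot_solution_derive2; case/andP: lam01 => lam0.
  rewrite le_eqVlt => /predU1P[->|lam_lt1]; first by rewrite subrr mul0r add0r mul1r.
  by rewrite ltr_pwDl ?mulr_ge0 ?mulr_gt0 ?subr_gt0 // ltW.
have D2g := is_deriveD (is_derive_edot (Dx' t0) (Dx t0)) (is_derive_edot (Dx t0) (Dx' t0)).
have := max_is_derive2_le0 Dg D2g gmax.
by rewrite edotC; have := edotxx_ge0 (x' t0); lra.
Qed.

Lemma solution_delays_le t : ymax (delays tau x t) <= r.
Proof. exact: ymax_delays_le (ltW r_gt0) (fun s => ltW (solution_norm_lt s)). Qed.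

Lemma solution_derive2_coord_le t k :
  `|x'' t 0 k| <= alpha * (edot (x' t) (x' t) + edot (x t) (x'' t)) + (K + r).
Proof.
have x_le := ltW (solution_norm_lt t).
have Fk : `|F t 0 k| <= alpha * (edot (x t) (F t) + edot (x' t) (x' t)) + K.
  rewrite -sqr_enorm; apply: le_trans (coord_le_enorm _ _) _.
  exact: hA3 x_le (solution_delays_le t).
have xk := le_trans (coord_le_enorm (x t) k) x_le.
rewrite edot_solution_derive2 solution_derive2 !mxE.
apply: le_trans (ler_norm_convex _ _ lam01) _.
case/andP: lam01 => lam0 lam1; have lam1' : 0 <= 1 - lam by rewrite subr_ge0.
have := ler_wpM2l lam1' xk; have := ler_wpM2l lam0 Fk.
have := mulr_ge0 (mulr_ge0 alpha_ge0 lam1') (edotxx_ge0 (x t)).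
have := mulr_ge0 (mulr_ge0 alpha_ge0 lam1') (edotxx_ge0 (x' t)).
have := mulr_ge0 lam1' K_ge0; have := mulr_ge0 lam0 (ltW r_gt0).
lra.
Qed.

Lemma solution_derive_coord_le t k : `|x' t 0 k| <= pi * (K + r).
Proof.
pose G s := alpha * edot (x s) (x' s) + (K + r) * s.
have DG (s : R) :
    is_derive s 1 G (alpha * (edot (x' s) (x' s) + edot (x s) (x'' s)) + (K + r)).
  apply: is_derive_eq.
    exact: is_deriveD (is_deriveZ alpha (is_derive_edot (Dx s) (Dx' s)))
      (is_deriveZ (K + r) (is_derive_id s 1)).
  by rewrite /GRing.scale /= mulr1.
have Gp s : G (s + 2 * pi) = G s + 2 * pi * (K + r).
  by rewrite /G xE.1 (derive1_periodic xE.1); ring.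
have -> : pi * (K + r) = 2 * pi * (K + r) / 2 by field.
apply: (periodic_derive_bound twopi_gt0 _ _ Gp (fun s => is_derive_coord k (Dx s))
  (fun s => is_derive_coord k (Dx' s)) DG) => [s|s|s].
- by rewrite xE.1.
- by rewrite (derive1_periodic xE.1).
- exact: solution_derive2_coord_le.
Qed.

Lemma solution_derive_le t : enorm (x' t) <= n%:R * (pi * (K + r)).
Proof.
apply: enorm_le_coord => [|k]; last exact: solution_derive_coord_le.
by rewrite mulr_ge0 ?pi_ge0 ?addr_ge0 ?(ltW r_gt0).
Qed.

Lemma solution_derive2_le (Phi : R) t :
  (forall s : R, 0 <= s <= n%:R * (pi * (K + r)) -> phi s <= Phi) ->
  enorm (x'' t) <= n%:R * (r + Phi).
Proof.
move=> phi_le.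
have F_le : enorm (F t) <= Phi.
  apply: le_trans (@hA2 t (x t) _ (x' t) (ltW (solution_norm_lt t)) (solution_delays_le t)) _.
  by apply: phi_le; rewrite enorm_ge0 solution_derive_le.
have Phi_ge0 := le_trans (enorm_ge0 _) F_le.
apply: enorm_le_coord => [|k]; first by rewrite addr_ge0 // ltW.
rewrite solution_derive2 !mxE; apply: le_trans (ler_norm_convex _ _ lam01) _.
have xk := le_trans (coord_le_enorm (x t) k) (ltW (solution_norm_lt t)).
have Fk := le_trans (coord_le_enorm (F t) k) F_le.
case/andP: lam01 => lam0 lam1; have lam1' : 0 <= 1 - lam by rewrite subr_ge0.
have := ler_wpM2l lam1' xk; have := ler_wpM2l lam0 Fk.
have := mulr_ge0 lam0 (ltW r_gt0); have := mulr_ge0 lam1' Phi_ge0.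
lra.
Qed.

End APrioriBounds.

Unset Implicit Arguments.

Theorem lemma4p2 (R : realType) (n m : nat) (hn : (1 <= n)%N) (hm : (1 <= m)%N)
  (tau : 'I_m -> R)
  (htau_pos : forall j, 0 < tau j)
  (htau_inc : forall i j : 'I_m, (i < j)%N -> tau i < tau j)
  (htau_lt : forall j, tau j < 2 * pi)
  (htau_sym : forall j : 'I_m, tau (rev_ord j) = 2 * pi - tau j)
  (f : R -> 'rV[R]_n -> 'M[R]_(m, n) -> 'rV[R]_n -> 'rV[R]_n)
  (* (A0) *)
  (hcont : continuous (fun p : R * 'rV[R]_n * 'M[R]_(m, n) * 'rV[R]_n =>
                          f p.1.1.1 p.1.1.2 p.1.2 p.2))
  (hper : forall t x y z, f (t + 2 * pi) x y z = f t x y z)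
  (* (A1) *)
  (r : R) (hr : 0 < r)
  (hA1 : forall t x y z, r <= enorm x -> ymax y <= enorm x -> edot x z = 0 ->
           0 < edot x (f t x y z))
  (* (A2) *)
  (phi : R -> R)
  (hphi_cont : {within `[0, +oo[, continuous phi})
  (hphi_pos : forall s, 0 <= s -> 0 < phi s)
  (hphi_int : (\int[lebesgue_measure]_(s in (`[0%R, +oo[ : set R)) (s / phi s)%:E = +oo)%E)
  (hA2 : forall t x y z, enorm x <= r -> ymax y <= r ->
           enorm (f t x y z) <= phi (enorm z))
  (* (A3) *)
  (alpha K : R) (halpha : 0 < alpha) (hK : 0 < K)
  (hA3 : forall t x y z, enorm x <= r -> ymax y <= r ->
           enorm (f t x y z) <= alpha * (edot x (f t x y z) + enorm z ^+ 2) + K) :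
  exists C : R, 0 < C /\
    forall (lam : R) (x : R -> 'rV[R]_n), 0 <= lam <= 1 ->
      in_E x -> F_zero tau f lam x -> normE x < C.
Proof.
set M := n%:R * (pi * (K + r)).
have M_ge0 : 0 <= M by rewrite mulr_ge0 ?mulr_ge0 ?pi_ge0 ?addr_ge0 ?(ltW hK) ?(ltW hr).
have phi_cont : {within `[0, M], continuous phi}.
  by apply: continuous_subspaceW hphi_cont; apply: subset_itvl; rewrite bnd_simp.
have [s0 _ phi_max] := EVT_max M_ge0 phi_cont.
have phi_le (s : R) : 0 <= s <= M -> phi s <= phi s0.
  by move=> sM; apply: phi_max; rewrite in_itv.
exists (Num.max r (Num.max M (n%:R * (r + phi s0))) + 1).
split; first by rewrite addr_gt0 // lt_max hr.
move=> lam x lam01 xE xF.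
have sx := supn_le (fun t => ltW (solution_norm_lt hr hA1 lam01 xE xF t)).
have sx' := supn_le (solution_derive_le hr hA1 (ltW halpha) (ltW hK) hA3 lam01 xE xF).
have sx'' := supn_le (fun t =>
  solution_derive2_le hr hA1 hA2 (ltW halpha) (ltW hK) hA3 lam01 xE xF t phi_le).
by apply: le_lt_trans (le_max2 sx (le_max2 sx' sx'')) _; rewrite ltrDl.
Qed.
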